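(* Let $\Gamma=(G,w,\ell)$ be a tropical curve, and let $(P,W)$ and $(P',W')$ be pairs with $P,P'\in\mathcal C_G$, $W,W'\subseteq V$, $P\cup W\neq\emptyset$, $P'\cup W'\ne\emptyset$. Then: (1) $D_{P,W}\sim D_{P',W'}$ if and only if $P=P'$; (2) $[D_{P,W}]$ is a theta-characteristic of $\Gamma$, i.e. $2D_{P,W}\sim K_\Gamma$.
   Context: A tropical curve is a triple $\Gamma=(G,w,\ell)$ where $G=(V,E)$ is a finite connected graph (loops and multiple edges allowed), $w\colon V\to\mathbb Z_{\ge 0}$ with $2w(v)-2+\deg_G(v)>0$ for all $v$ (loops count twice), and $\ell\colon E\to\mathbb R_{>0}$; it is viewed as a metric space with edges segments (circles for loops) of length $\ell(e)$, and $d(p,q)$ is the shortest path length. Extend $w$ to all points by $w(p)=0$ for $p\notin V$. Divisors, rational functions, linear equivalence $\sim$ and $\operatorname{Pic}(\Gamma)$ are the usual tropical ones; $K_\Gamma=\sum_{v\in V}(2w(v)-2+\deg_G(v))v$; a theta-characteristic is a class $[D]$ with $[2D]=[K_\Gamma]$. $\mathcal C_G$ is the set of $P\subseteq E$ such that every vertex has even degree in $P$. For $P\in\mathcal C_G$ and $W\subseteq V$ with $P\cup W\neq\emptyset$, let $\Gamma_{P,W}\subseteq\Gamma$ be the closed subset consisting of the edges in $P$ (with their endpoints) together with the vertices in $W$, and let $d_{P,W}(p)=d(p,\Gamma_{P,W})$. This function is piecewise linear, of slope $0$ on $P$ and $\pm1$ elsewhere, with at most one non-linear (critical) point in the interior of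 each edge. Let $\widehat G_{P,W}$ be the subdivision of $G$ obtained by inserting a vertex at each such interior critical point. The sub-orientation $O_{P,W}$ on $\widehat G_{P,W}$ is: on edges of $P$ choose any cyclic orientation (each vertex has equal in- and out-degree in $P$); orient every other edge of $\widehat G_{P,W}$ in the direction in which $d_{P,W}$ increases. For $p\in\Gamma$ let $\deg^-(p)$ be the number of edges of $\widehat G_{P,W}$ whose target is $p$ if $p\in V(\widehat G_{P,W})$, and $\deg^-(p)=1$ otherwise. Define $D_{P,W}:=\sum_{p\in\Gamma}(\deg^-(p)-1+w(p))p$ (a finite sum supported on $V(\widehat G_{P,W})$). *)

From HB Require Import structures.
From mathcomp Require Import all_boot all_order all_algebra.
From mathcomp Require Import boolp classical_sets reals.
Set Implicit Arguments. Unset Strict Implicit. Unset Printing Implicit Defensive.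
Import Order.TTheory GRing.Theory Num.Theory.
Local Open Scope ring_scope.

(* Tropical curves.  A finite multigraph (loops and multiple edges allowed)  *)
(* is given by finite types of vertices and edges and, for each edge, two    *)
(* endpoints [src e], [tgt e] (an arbitrary but fixed parametrisation       *)
(* direction; for a loop src e = tgt e).                                     *)

Definition gadj (V E : finType) (src tgt : E -> V) : rel V :=
  fun u v => [exists e, ((src e == u) && (tgt e == v)) || ((tgt e == u) && (src e == v))].

(* degree of v in the set of edges P, loops counted twice *)
Definition degin_set (V E : finType) (src tgt : E -> V) (P : {set E}) (v : V) : nat :=
  #|[set e in P | src e == v]| + #|[set e in P | tgt e == v]|.

Record tcurve (R : realType) := TCurve {
  tV : finType;
  tE : finType;
  tsrc : tE -> tV;
  ttgt : tE -> tV;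
  tw : tV -> nat;
  tl : tE -> R;
  tconnected : forall u v : tV, connect (gadj tsrc ttgt) u v;
  tstable : forall v : tV, (2 < 2 * tw v + degin_set tsrc ttgt (finset.setT) v)%N;
  tl_pos : forall e : tE, 0 < tl e
}.

Section TropicalCurve.
Variable R : realType.
Variable G : tcurve R.

Notation V := (tV G).
Notation E := (tE G).
Notation src := (@tsrc R G).
Notation tgt := (@ttgt R G).
Notation w := (@tw R G).
Notation l := (@tl R G).

(* Points of the metric space Gamma: vertices, and interior points of edges, *)
(* [Inner e t] being the point at distance t from [src e] along e, which is  *)
(* a genuine point iff 0 < t < l e (predicate [is_pt]).                      *)
Inductive pt := Vert of V | Inner of E & R.

Definition is_pt (p : pt) : Prop :=
  match p with Vert _ => True | Inner e t => 0 < t < l e end.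

Definition ptAt (e : E) (s : R) : pt :=
  if s == 0 then Vert (src e) else if s == l e then Vert (tgt e) else Inner e s.

Definition onEdge (e : E) (p : pt) (a : R) : Prop :=
  match p with
  | Vert v => (src e = v /\ a = 0) \/ (tgt e = v /\ a = l e)
  | Inner e' t => e' = e /\ 0 < t < l e /\ a = t
  end.

(* polygonal paths: successive points on a common closed edge; c = length *)
Inductive chain : pt -> pt -> R -> Prop :=
| chain0 p : chain p p 0
| chainS p x q e a b c :
    onEdge e p a -> onEdge e x b -> chain x q c -> chain p q (`|a - b| + c).

Definition dist (p q : pt) : R := inf [set c | chain p q c].

(* divisors: integer-valued functions on points (only values at genuine   *)
(* points matter)                                                          *)
Definition divisor := pt -> int.

Definition is_rat (f : pt -> R) : Prop :=
  forall e : E, exists (k : nat) (b : nat -> R) (m : nat -> int),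
    [/\ b 0%N = 0, b k = l e,
        forall i, (i < k)%N -> b i < b i.+1 &
        forall i, (i < k)%N -> forall s, b i <= s <= b i.+1 ->
          f (ptAt e s) = f (ptAt e (b i)) + (m i)%:~R * (s - b i)].

(* outgoing slope of f at parameter a of edge e, towards tgt e / src e *)
Definition rslope (f : pt -> R) (e : E) (a : R) : int :=
  xget 0 [set m : int | exists2 d : R, 0 < d & forall h, 0 <= h < d ->
            f (ptAt e (a + h)) = f (ptAt e a) + m%:~R * h].
Definition lslope (f : pt -> R) (e : E) (a : R) : int :=
  xget 0 [set m : int | exists2 d : R, 0 < d & forall h, 0 <= h < d ->
            f (ptAt e (a - h)) = f (ptAt e a) + m%:~R * h].

Definition divf (f : pt -> R) : divisor := fun p =>
  match p with
  | Vert v => \sum_(e | src e == v) rslope f e 0 + \sum_(e | tgt e == v) lslope f e (l e)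
  | Inner e t => rslope f e t + lslope f e t
  end.

Definition lin_equiv (D D' : divisor) : Prop :=
  exists f, is_rat f /\ forall p, is_pt p -> D p - D' p = divf f p.

Definition Kcan : divisor := fun p =>
  match p with
  | Vert v => (2 * w v)%:Z - 2 + (degin_set src tgt [set: E] v)%:Z
  | Inner _ _ => 0
  end.

Definition theta_char (D : divisor) : Prop := lin_equiv (fun p => 2 * D p) Kcan.

Definition evenP (P : {set E}) : bool := [forall v, ~~ odd (degin_set src tgt P v)].

(* cyclic orientation of P: O e = true means e oriented from src e to tgt e *)
Definition cyclic_orient (P : {set E}) (O : E -> bool) : Prop :=
  forall v, #|[set e in P | (if O e then tgt e else src e) == v]| =
            #|[set e in P | (if O e then src e else tgt e) == v]|.

Section DPW.
Variables (P : {set E}) (W : {set V}) (O : E -> bool).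

Definition GammaPW : set pt :=
  [set q | (exists e a, e \in P /\ onEdge e q a) \/ (exists v, v \in W /\ q = Vert v)].

Definition dPW (p : pt) : R := inf [set c | exists2 q, GammaPW q & c = dist p q].

Definition crit (e : E) (t : R) : Prop :=
  0 < t < l e /\
  ~ (exists d : R, exists m : R, 0 < d /\ forall s, 0 < s < l e -> `|s - t| < d ->
        dPW (ptAt e s) = dPW (ptAt e t) + m * (s - t)).

(* the edge of hat G leaving the point at parameter a of e towards tgt e  *)
(* (resp. towards src e) is oriented INTO that point, i.e. d_{P,W}          *)
(* increases towards the point along that edge                             *)
Definition into_r (e : E) (a : R) : Prop :=
  exists2 d : R, 0 < d & forall s, a < s < a + d -> s < l e ->
     dPW (ptAt e s) < dPW (ptAt e a).
Definition into_l (e : E) (a : R) : Prop :=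
  exists2 d : R, 0 < d & forall s, a - d < s < a -> 0 < s ->
     dPW (ptAt e s) < dPW (ptAt e a).

(* in-degree of a vertex of G in the sub-orientation O_{P,W} of hat G *)
Definition indegV (v : V) : nat :=
  \sum_(e in P) ((O e && (tgt e == v)) + (~~ O e && (src e == v)))%N
  + \sum_(e in ~: P) ((`[< into_r e 0 >] && (src e == v))
                     + (`[< into_l e (l e) >] && (tgt e == v)))%N.

Definition DPW : divisor := fun p =>
  match p with
  | Vert v => (indegV v)%:Z - 1 + (w v)%:Z
  | Inner e t =>
      if `[< crit e t >] then (`[< into_l e t >] + `[< into_r e t >])%:Z - 1 else 0
  end.

End DPW.
End TropicalCurve.

From HB Require Import structures.
From mathcomp Require Import all_boot all_order all_algebra.
From mathcomp Require Import boolp classical_sets reals.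
From mathcomp Require Import ring lra zify.

(* Proposition 3.4.  Along an edge e, d = d_{P,W} is 0 if e is in P and a   *)
(* tent s |-> min (d(src e) + s, d(tgt e) + l e - s) otherwise.  Hence -d is  *)
(* a rational function with slopes 0 on P and +-1 off P, and counting        *)
(* outgoing slopes yields the key identity div(-d_{P,W}) = 2 D_{P,W} - K,     *)
(* which is part (2).  Part (1): if P = P', then (d_{P,W'} - d_{P,W}) / 2 has *)
(* integer slopes and divisor D_{P,W} - D_{P,W'}.  Conversely, if            *)
(* D_{P,W} - D_{P',W'} = div f, then h = 2 f - d_{P',W'} + d_{P,W} has zero   *)
(* divisor, so it is affine on every edge and its slopes form a sourceless    *)
(* current, which vanishes by an energy argument; at the start of an edge,    *)
(* 0 = 2 (slope of f) + (slope of -d_{P',W'}) - (slope of -d_{P,W}), so these *)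
(* two slopes have the same parity and the edge is in P iff it is in P'.    *)

Set Implicit Arguments. Unset Strict Implicit. Unset Printing Implicit Defensive.
Import Order.TTheory GRing.Theory Num.Theory.
Local Open Scope ring_scope.
Local Open Scope classical_set_scope.

Section OneSidedSlopes.
Variable R : realType.
Implicit Types (F H : R -> R) (a u x y L : R) (m n k : int).

Definition has_rslope F a m :=
  exists2 d : R, 0 < d & forall h, 0 <= h < d -> F (a + h) = F a + m%:~R * h.
Definition has_lslope F a m :=
  exists2 d : R, 0 < d & forall h, 0 <= h < d -> F (a - h) = F a + m%:~R * h.

Lemma exists_pos_below (d1 d2 : R) : 0 < d1 -> 0 < d2 ->
  exists h : R, [/\ 0 < h, h < d1 & h < d2].
Proof.
move=> d1_gt0 d2_gt0; case: (lerP d1 d2) => d12.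
  by exists (d1 / 2); split; lra.
by exists (d2 / 2); split; lra.
Qed.

Lemma has_lslope_reflect F a m :
  has_lslope F a m <-> has_rslope (fun s => F (- s)) (- a) m.
Proof.
split=> -[d d_gt0 Hd]; exists d => // h /Hd; first by rewrite opprD !opprK.
by rewrite opprD !opprK.
Qed.

Lemma has_rslope_uniq F a m n : has_rslope F a m -> has_rslope F a n -> m = n.
Proof.
move=> [d1 d1_gt0 H1] [d2 d2_gt0 H2].
have [h [h_gt0 hd1 hd2]] := exists_pos_below d1_gt0 d2_gt0.
have h_in (d : R) : h < d -> 0 <= h < d by move=> hd; apply/andP; split; lra.
have := H2 h (h_in _ hd2); rewrite H1 ?h_in // => /addrI /(mulIf (lt0r_neq0 h_gt0)).
by move/eqP; rewrite eqr_int => /eqP.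
Qed.

Lemma has_lslope_uniq F a m n : has_lslope F a m -> has_lslope F a n -> m = n.
Proof. by rewrite !has_lslope_reflect; apply: has_rslope_uniq. Qed.

Lemma has_rslope_lin (c1 c2 : R) F1 F2 H a m1 m2 k :
  (forall s, H s = c1 * F1 s + c2 * F2 s) -> c1 * m1%:~R + c2 * m2%:~R = k%:~R ->
  has_rslope F1 a m1 -> has_rslope F2 a m2 -> has_rslope H a k.
Proof.
move=> HE Hk [d1 d1_gt0 H1] [d2 d2_gt0 H2].
have [d [d_gt0 dd1 dd2]] := exists_pos_below d1_gt0 d2_gt0.
exists d => // h /andP[h_ge0 hd].
rewrite !HE -Hk H1 ?H2; [ring | apply/andP; split; lra | apply/andP; split; lra].
Qed.

Lemma has_lslope_lin (c1 c2 : R) F1 F2 H a m1 m2 k :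
  (forall s, H s = c1 * F1 s + c2 * F2 s) -> c1 * m1%:~R + c2 * m2%:~R = k%:~R ->
  has_lslope F1 a m1 -> has_lslope F2 a m2 -> has_lslope H a k.
Proof. by move=> HE Hk; rewrite !has_lslope_reflect; apply: has_rslope_lin. Qed.

Lemma has_rslope_opp F a m : has_rslope F a m -> has_rslope (fun s => - F s) a (- m).
Proof.
move=> H; apply: (has_rslope_lin (c1 := -1) (c2 := 0) _ _ H H); first by move=> s; ring.
by rewrite intrN; ring.
Qed.

Lemma has_lslope_opp F a m : has_lslope F a m -> has_lslope (fun s => - F s) a (- m).
Proof. by rewrite !has_lslope_reflect; apply: has_rslope_opp. Qed.

Definition affine_on F x y m := forall s, x <= s <= y -> F s = F x + m%:~R * (s - x).

Lemma affine_on_rslope F x y m : affine_on F x y m -> x < y -> has_rslope F x m.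
Proof.
move=> Hm xy; exists (y - x); first by lra.
move=> h /andP[h_ge0 hyx]; rewrite Hm; last by apply/andP; split; lra.
by rewrite addrAC subrr add0r.
Qed.

Lemma affine_on_lslope F x y m : affine_on F x y m -> x < y -> has_lslope F y (- m).
Proof.
move=> Hm xy; exists (y - x); first by lra.
move=> h /andP[h_ge0 hyx].
rewrite (Hm (y - h)) ?(Hm y) ?intrN; [ring | apply/andP; split; lra..].
Qed.

Lemma affine_on_join F x z y m : affine_on F x z m -> affine_on F z y m ->
  x < z -> z < y -> affine_on F x y m.
Proof.
move=> H1 H2 xz zy s /andP[xs sy]; case: (lerP s z) => sz.
  by rewrite H1 // xs sz.
rewrite H2 ?sy ?(ltW sz) // H1 ?lexx ?(ltW xz) //; ring.
Qed.

Definition avoids (S : seq R) x y := forall z, z \in S -> ~~ (x < z < y).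
Definition pw_affine F u L (S : seq R) := forall x y, u <= x -> x < y -> y <= L ->
  avoids S x y -> exists m, affine_on F x y m.

Lemma avoids_catl S1 S2 x y : avoids (S1 ++ S2) x y -> avoids S1 x y.
Proof. by move=> H z zS; apply: H; rewrite mem_cat zS. Qed.
Lemma avoids_catr S1 S2 x y : avoids (S1 ++ S2) x y -> avoids S2 x y.
Proof. by move=> H z zS; apply: H; rewrite mem_cat zS orbT. Qed.

Lemma avoids_cons z S x y : avoids S x y -> ~~ (x < z < y) -> avoids (z :: S) x y.
Proof. by move=> H Hz w; rewrite inE => /orP[/eqP -> | /H]. Qed.

Lemma pw_affine_lin (c1 c2 : int) F1 F2 H u L S1 S2 :
  (forall s, H s = c1%:~R * F1 s + c2%:~R * F2 s) ->
  pw_affine F1 u L S1 -> pw_affine F2 u L S2 -> pw_affine H u L (S1 ++ S2).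
Proof.
move=> HE H1 H2 x y ux xy yL av.
have [m1 Hm1] := H1 x y ux xy yL (avoids_catl av).
have [m2 Hm2] := H2 x y ux xy yL (avoids_catr av).
exists (c1 * m1 + c2 * m2) => s Hs.
by rewrite !HE (Hm1 s) ?(Hm2 s) // intrD !intrM; ring.
Qed.

Lemma avoids_right (S : seq R) a L : a < L ->
  exists d, [/\ 0 < d, a + d <= L & avoids S a (a + d)].
Proof.
move=> aL; elim: S => [|z S [d [d_gt0 dL av]]].
  by exists (L - a); split; [lra | lra | ].
case: (ltP a z) => az; last first.
  by exists d; split => //; apply: avoids_cons => //; apply/negP => /andP[]; lra.
have za : 0 < z - a by lra.
have [h [h_gt0 hd hz]] := exists_pos_below d_gt0 za.
exists h; split => //; first by lra.
apply: avoids_cons; last by apply/negP => /andP[_]; lra.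
move=> w /av; apply: contra => /andP[w1 w2]; apply/andP; split => //; lra.
Qed.

Lemma avoids_left (S : seq R) u a : u < a ->
  exists d, [/\ 0 < d, u <= a - d & avoids S (a - d) a].
Proof.
move=> ua; elim: S => [|z S [d [d_gt0 dL av]]].
  by exists (a - u); split; [lra | lra | ].
case: (ltP z a) => az; last first.
  by exists d; split => //; apply: avoids_cons => //; apply/negP => /andP[]; lra.
have za : 0 < a - z by lra.
have [h [h_gt0 hd hz]] := exists_pos_below d_gt0 za.
exists h; split => //; first by lra.
apply: avoids_cons; last by apply/negP => /andP[]; lra.
move=> w /av; apply: contra => /andP[w1 w2]; apply/andP; split => //; lra.
Qed.

Lemma pw_affine_rslope F u L S a : pw_affine F u L S -> u <= a -> a < L ->
  exists m, has_rslope F a m.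
Proof.
move=> HF ua aL; have [d [d_gt0 dL av]] := avoids_right S aL.
have [m Hm] := HF a (a + d) ua ltac:(lra) dL av.
by exists m; apply: affine_on_rslope Hm _; lra.
Qed.

Lemma pw_affine_lslope F u L S a : pw_affine F u L S -> u < a -> a <= L ->
  exists m, has_lslope F a m.
Proof.
move=> HF ua aL; have [d [d_gt0 ud av]] := avoids_left S ua.
have [m Hm] := HF (a - d) a ud ltac:(lra) aL av.
by exists (- m); apply: affine_on_lslope Hm _; lra.
Qed.

(* F is balanced on (u, L) if at every interior point its two outgoing  *)
(* slopes cancel, i.e. its principal divisor vanishes there.            *)
Definition balanced F u L := forall t m n, u < t < L ->
  has_rslope F t m -> has_lslope F t n -> m + n = 0.

(* At a balanced point z the two pieces around z have the same slope, so  *)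
(* the breakpoint z can be removed.                                        *)
Lemma pw_affine_drop F u L z S : balanced F u L ->
  pw_affine F u L (z :: S) -> pw_affine F u L S.
Proof.
move=> Hbal HF x y ux xy yL av.
have [/andP[xz zy] | Hz] := boolP (x < z < y); last exact: HF (avoids_cons av Hz).
have av1 : avoids (z :: S) x z.
  apply: avoids_cons; last by rewrite ltxx andbF.
  by move=> w /av; apply: contra => /andP[w1 w2]; apply/andP; split => //; lra.
have av2 : avoids (z :: S) z y.
  apply: avoids_cons; last by rewrite ltxx.
  by move=> w /av; apply: contra => /andP[w1 w2]; apply/andP; split => //; lra.
have [m1 H1] := HF x z ux xz ltac:(lra) av1.
have [m2 H2] := HF z y ltac:(lra) zy yL av2.
have uzL : u < z < L by apply/andP; split; lra.
have := Hbal z m2 (- m1) uzL (affine_on_rslope H2 zy) (affine_on_lslope H1 xz).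
move=> m12; exists m1; apply: affine_on_join H1 _ xz zy.
by have -> : m1 = m2 by lia.
Qed.

Lemma balanced_affine F u L S : pw_affine F u L S -> u < L -> balanced F u L ->
  exists k, affine_on F u L k.
Proof.
move=> HF uL Hbal; elim: S HF => [|z S IH] HF.
  by apply: HF; rewrite ?lexx.
by apply: IH; apply: pw_affine_drop HF.
Qed.

(* The explicit description of piecewise affine functions used in [is_rat]: *)
(* a subdivision u = b 0 < ... < b k = L with an affine piece on each cell. *)
Definition pieces F u L := exists (k : nat) (b : nat -> R) (m : nat -> int),
  [/\ b 0%N = u, b k = L, forall i, (i < k)%N -> b i < b i.+1 &
      forall i, (i < k)%N -> forall s, b i <= s <= b i.+1 ->
        F s = F (b i) + (m i)%:~R * (s - b i)].

Lemma pieces_cat F u z L : pieces F u z -> pieces F z L -> pieces F u L.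
Proof.
move=> [k1 [b1 [m1 [b10 b1k inc1 f1]]]] [k2 [b2 [m2 [b20 b2k inc2 f2]]]].
pose b i := if (i <= k1)%N then b1 i else b2 (i - k1)%N.
have bE i : (k1 <= i)%N -> b i = b2 (i - k1)%N.
  rewrite /b; case: ifP => // ik1 k1i; have -> : i = k1 by lia.
  by rewrite subnn b20 b1k.
have shift i : (k1 <= i)%N -> (i.+1 - k1 = (i - k1).+1)%N by lia.
exists (k1 + k2)%N, b, (fun i => if (i < k1)%N then m1 i else m2 (i - k1)%N); split.
- by rewrite /b leq0n.
- by rewrite bE ?leq_addr // addKn b2k.
- move=> i ik; case: (ltnP i k1) => ik1.
    by rewrite /b (ltnW ik1) ik1; apply: inc1.
  by rewrite !bE ?shift //; [apply: inc2; lia | lia].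
- move=> i ik s; case: (ltnP i k1) => ik1 /=.
    by rewrite /b (ltnW ik1) ik1; apply: f1.
  by rewrite !bE ?shift //; [apply: f2; lia | lia].
Qed.

Lemma pw_affine_pieces F (S : seq R) u L : u < L -> pw_affine F u L S -> pieces F u L.
Proof.
elim: S u L => [|z S IH] u L uL HF.
  have [m Hm] : exists m, affine_on F u L m by apply: HF; rewrite ?lexx.
  exists 1%N, (fun i => if i == 0%N then u else L), (fun _ => m); split => //.
    by move=> i; rewrite ltnS leqn0 => /eqP ->.
  by move=> i; rewrite ltnS leqn0 => /eqP -> s /= Hs; exact: Hm.
have [/andP[uz zL] | Hz] := boolP (u < z < L); last first.
  apply: (IH u L uL) => x y ux xy yL av; apply: HF => //; apply: avoids_cons => //.
  by apply: contra Hz => /andP[z1 z2]; apply/andP; split; lra.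
apply: (@pieces_cat _ _ z).
  apply: (IH u z uz) => x y ux xy yz av; apply: HF => //; first by lra.
  by apply: avoids_cons => //; apply/negP => /andP[_]; lra.
apply: (IH z L zL) => x y zx xy yL av; apply: HF => //; first by lra.
by apply: avoids_cons => //; apply/negP => /andP[]; lra.
Qed.

Lemma pieces_pw_affine F u L : pieces F u L -> exists S, pw_affine F u L S.
Proof.
move=> [k [b [m [b0 bk inc f]]]]; exists (mkseq b k.+1).
move=> x y ux xy yL av.
have [i [ik /andP[bix xbi]]] : exists i, (i < k)%N /\ b i <= x < b i.+1.
  have : x < b k by rewrite bk; lra.
  have : b 0%N <= x by rewrite b0.
  elim: k {inc f bk av} => [|j IH] b0x xbj; first by lra.
  case: (ltP x (b j)) => xj; last by exists j; split => //; apply/andP.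
  by have [i [ij Hi]] := IH b0x xj; exists i; split => //; lia.
have ybi : y <= b i.+1.
  case: (lerP y (b i.+1)) => // ybi.
  have bin : b i.+1 \in mkseq b k.+1 by apply/mapP; exists i.+1 => //; rewrite mem_iota; lia.
  by move: (av _ bin); rewrite xbi ybi.
exists (m i) => s /andP[xs sy].
rewrite (f i ik s) ?(f i ik x); [ring | apply/andP; split; lra..].
Qed.

End OneSidedSlopes.

Section SlopeClasses.
Variable R : realType.
Implicit Types (F : R -> R) (a c x y L : R) (m : int) (o : bool).

(* The slopes of a distance-to-Gamma_{P,W} profile along an edge e are     *)
(* +-1 when e is not in P (o = true) and 0 when e is in P (o = false).     *)
Definition slope_class o m := if o then m = 1 \/ m = -1 else m = 0.

Lemma slope_class_opp o m : slope_class o m -> slope_class o (- m).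
Proof. by case: o => [[] -> | ->]; [right | left | ]. Qed.

Lemma slope_class_diff_even o m1 m2 : slope_class o m1 -> slope_class o m2 ->
  exists k, m1 - m2 = k * 2.
Proof.
by case: o => [[] -> [] -> | -> ->]; [exists 0 | exists 1 | exists (-1) | exists 0 | exists 0].
Qed.

Lemma slope_class_parity o o' m m' k : slope_class o m -> slope_class o' m' ->
  m - m' = k * 2 -> o = o'.
Proof.
move=> cm cm' Hk; case: o cm => [[] Em | Em]; case: o' cm' => [[] Em' | Em'] //;
  by rewrite Em Em' in Hk; lia.
Qed.

Lemma intr_half (m k : int) : m = k * 2 -> k%:~R = m%:~R / 2 :> R.
Proof. by move=> ->; rewrite intrM mulfK // pnatr_eq0. Qed.

Definition pw_affine_cls F L (S : seq R) o := forall x y, 0 <= x -> x < y -> y <= L ->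
  avoids S x y -> exists m, slope_class o m /\ affine_on F x y m.

Lemma pw_affine_cls_pw F L S o : pw_affine_cls F L S o -> pw_affine F 0 L S.
Proof. by move=> H x y x0 xy yL /(H x y x0 xy yL) [m [_ Hm]]; exists m. Qed.

Lemma pw_affine_cls_opp F L S o : pw_affine_cls F L S o -> pw_affine_cls (fun s => - F s) L S o.
Proof.
move=> H x y x0 xy yL /(H x y x0 xy yL) [m [cm Hm]].
by exists (- m); split; [exact: slope_class_opp | move=> s Hs; rewrite Hm // intrN; ring].
Qed.

Lemma pw_affine_cls_half F1 F2 L S1 S2 o : pw_affine_cls F1 L S1 o -> pw_affine_cls F2 L S2 o ->
  pw_affine (fun s => (F1 s - F2 s) / 2) 0 L (S1 ++ S2).
Proof.
move=> H1 H2 x y x0 xy yL av.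
have [m1 [c1 E1]] := H1 x y x0 xy yL (avoids_catl av).
have [m2 [c2 E2]] := H2 x y x0 xy yL (avoids_catr av).
have [k Hk] := slope_class_diff_even c1 c2.
exists k => s Hs; rewrite (E1 s) ?(E2 s) //.
by rewrite (intr_half Hk) intrB; field.
Qed.

Lemma pw_affine_cls_rslope F L S o a : pw_affine_cls F L S o -> 0 <= a -> a < L ->
  exists m, slope_class o m /\ has_rslope F a m.
Proof.
move=> HF a0 aL; have [d [d_gt0 dL av]] := avoids_right S aL.
have [m [cm Hm]] := HF a (a + d) a0 ltac:(lra) dL av.
by exists m; split => //; apply: affine_on_rslope Hm _; lra.
Qed.

Lemma pw_affine_cls_lslope F L S o a : pw_affine_cls F L S o -> 0 < a -> a <= L ->
  exists m, slope_class o m /\ has_lslope F a m.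
Proof.
move=> HF a0 aL; have [d [d_gt0 ud av]] := avoids_left S a0.
have [m [cm Hm]] := HF (a - d) a ud ltac:(lra) aL av.
exists (- m); split; first exact: slope_class_opp.
by apply: affine_on_lslope Hm _; lra.
Qed.

(* Local notions along an edge [0, L] mirroring [crit], [into_r], [into_l]. *)
Definition crit_at F L t := 0 < t < L /\ ~ (exists d : R, exists m : R, 0 < d /\
  forall s, 0 < s < L -> `|s - t| < d -> F s = F t + m * (s - t)).
Definition into_right F L a := exists2 d : R, 0 < d &
  forall s, a < s < a + d -> s < L -> F s < F a.
Definition into_left F a := exists2 d : R, 0 < d &
  forall s, a - d < s < a -> 0 < s -> F s < F a.

(* A tent on [0, L]: F s = min (A + s, B + L - s), with peak at c; the  *)
(* bounds on A and B say that F is 1-Lipschitz at the ends.             *)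
Definition is_tent F L A B c := [/\ 0 < L, A <= B + L, B <= A + L, 2 * c = B + L - A &
  forall s, 0 <= s <= L -> F s = Num.min (A + s) (B + L - s)].

Section Tent.
Variables (F : R -> R) (L A B c : R).
Hypothesis tent : is_tent F L A B c.

(* [lra] only reads the local context, so the bounds are brought there. *)
Local Ltac tent_bounds := have [L_gt0 ? ? ? _] := tent.

Lemma peak_ge0 : 0 <= c. Proof. tent_bounds; lra. Qed.
Lemma peak_leL : c <= L. Proof. tent_bounds; lra. Qed.

Lemma tent_up s : 0 <= s -> s <= c -> F s = A + s.
Proof.
have [? ? ? ? tentE] := tent; move=> s0 sc.
by rewrite tentE ?min_l //; try (apply/andP; split); lra.
Qed.
Lemma tent_down s : c <= s -> s <= L -> F s = B + L - s.
Proof.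
have [? ? ? ? tentE] := tent; move=> cs sL.
by rewrite tentE ?min_r //; try (apply/andP; split); lra.
Qed.

Lemma tent_rslope a : 0 <= a -> a < L -> has_rslope F a (if a < c then 1 else -1).
Proof.
tent_bounds; move=> a0 aL; case: ifP => [ac | /negbT]; last rewrite -leNgt => ca.
  by exists (c - a) => [|h /andP[h0 h1]]; [lra | rewrite !tent_up; lra].
exists (L - a) => [|h /andP[h0 h1]]; first lra.
by rewrite !tent_down ?intrN; lra.
Qed.

Lemma tent_lslope a : 0 < a -> a <= L -> has_lslope F a (if c < a then 1 else -1).
Proof.
tent_bounds; move=> a0 aL; case: ifP => [ca | /negbT]; last rewrite -leNgt => ac.
  by exists (a - c) => [|h /andP[h0 h1]]; [lra | rewrite !tent_down; lra].
exists a => // h /andP[h0 h1].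
by rewrite !tent_up ?intrN; lra.
Qed.

Lemma tent_pw_affine_cls : pw_affine_cls F L [:: c] true.
Proof.
tent_bounds; move=> x y x0 xy yL /(_ c); rewrite mem_seq1 eqxx => /(_ isT) /negP c_out.
case: (lerP y c) => yc.
  by exists 1; split; [left | move=> s /andP[xs sy]; rewrite !tent_up; lra].
have cx : c <= x by case: (lerP c x) => // xc; case: c_out; apply/andP.
by exists (-1); split; [right | move=> s /andP[xs sy]; rewrite !tent_down ?intrN; lra].
Qed.

Lemma tent_crit t : 0 < t < L -> crit_at F L t <-> t = c.
Proof.
tent_bounds; move=> /andP[t0 tL]; split.
  move=> [_ not_lin]; apply/eqP/negP => /negP tc; apply: not_lin.
  case: (ltgtP t c) tc => // [tc | ct] _.
    exists (c - t), 1; split => [|s /andP[s0 sL]]; first lra.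
    by rewrite ltr_distlC => /andP[s1 s2]; rewrite !tent_up; lra.
  exists (t - c), (-1); split => [|s /andP[s0 sL]]; first lra.
  by rewrite ltr_distlC => /andP[s1 s2]; rewrite !tent_down; lra.
move=> tc; split => [|[d [m [d_gt0 lin]]]]; first by apply/andP.
have [h [h_gt0 hd hc]] := exists_pos_below d_gt0 (ltac:(lra) : 0 < c).
have [h' [h'_gt0 h'h h'c]] := exists_pos_below h_gt0 (ltac:(lra) : 0 < L - c).
have near s : `|s - c| <= h' -> 0 < s < L /\ `|s - c| < d.
  rewrite ler_distlC => /andP[s1 s2].
  by split; [apply/andP; split | rewrite ltr_distlC; apply/andP; split]; lra.
rewrite tc in lin.
have [in1 near1] := near (c - h') ltac:(rewrite addrAC subrr add0r normrN gtr0_norm; lra).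
have [in2 near2] := near (c + h') ltac:(rewrite addrAC subrr add0r gtr0_norm; lra).
have Fc : F c = A + c by rewrite tent_up ?peak_ge0.
have Fl : F (c - h') = A + (c - h') by rewrite tent_up //; lra.
have Fr : F (c + h') = B + L - (c + h') by rewrite tent_down //; lra.
by move: (lin _ in1 near1) (lin _ in2 near2); rewrite Fc Fl Fr => *; lra.
Qed.

Lemma tent_into_right0 : into_right F L 0 <-> c = 0.
Proof.
tent_bounds; split=> [[d d_gt0 dec] | c0]; last first.
  by exists L => // s /andP[s0 s1] sL; rewrite !tent_down; lra.
apply/eqP; rewrite eq_le peak_ge0 andbT leNgt; apply/negP => c_gt0.
have [h [h_gt0 hd hc]] := exists_pos_below d_gt0 c_gt0.
have [h' [h'_gt0 h'h h'L]] := exists_pos_below h_gt0 L_gt0.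
have := dec h' ltac:(apply/andP; split; lra) ltac:(lra).
by rewrite !tent_up; lra.
Qed.

Lemma tent_into_leftL : into_left F L <-> c = L.
Proof.
tent_bounds; split=> [[d d_gt0 dec] | cL]; last first.
  by exists L => // s /andP[s0 s1] sL; rewrite !tent_up; lra.
apply/eqP; rewrite eq_le peak_leL /= leNgt; apply/negP => cL.
have [h [h_gt0 hd hc]] := exists_pos_below d_gt0 (ltac:(lra) : 0 < L - c).
have [h' [h'_gt0 h'h h'L]] := exists_pos_below h_gt0 L_gt0.
have := dec (L - h') ltac:(apply/andP; split; lra) ltac:(lra).
by rewrite !tent_down; lra.
Qed.

Lemma tent_into_peak : 0 < c -> c < L -> into_left F c /\ into_right F L c.
Proof.
tent_bounds; move=> c0 cL; split.
  by exists c => // s /andP[s0 s1] _; rewrite !tent_up; lra.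
by exists (L - c) => [|s /andP[s0 s1] _]; [lra | rewrite !tent_down; lra].
Qed.
End Tent.

Definition is_flat F L := forall s, 0 <= s <= L -> F s = 0.

Section Flat.
Variables (F : R -> R) (L : R).
Hypothesis flatE : is_flat F L.

Lemma flat_rslope a : 0 <= a -> a < L -> has_rslope F a 0.
Proof.
move=> a0 aL; exists (L - a) => [|h /andP[h0 h1]]; first lra.
by rewrite !flatE ?mul0r ?addr0 //; apply/andP; split; lra.
Qed.

Lemma flat_lslope a : 0 < a -> a <= L -> has_lslope F a 0.
Proof.
move=> a0 aL; exists a => // h /andP[h0 h1].
by rewrite !flatE ?mul0r ?addr0 //; apply/andP; split; lra.
Qed.

Lemma flat_pw_affine_cls : pw_affine_cls F L [::] false.
Proof.
move=> x y x0 xy yL _; exists 0; split => // s /andP[xs sy].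
by rewrite !flatE ?mul0r ?addr0 //; apply/andP; split; lra.
Qed.

Lemma flat_not_crit t : ~ crit_at F L t.
Proof.
move=> [/andP[t0 tL] []]; exists (Num.min t (L - t)), 0; split.
  by rewrite lt_min t0 subr_gt0 tL.
by move=> s /andP[s0 sL] _; rewrite !flatE ?mul0r ?addr0 //; apply/andP; split; lra.
Qed.

End Flat.
End SlopeClasses.

Section Distance.
Variable R : realType.
Variable G : tcurve R.
Notation V := (tV G).
Notation E := (tE G).
Notation src := (@tsrc R G).
Notation tgt := (@ttgt R G).
Notation l := (@tl R G).
Notation pt := (pt G).
Implicit Types (p q x : pt) (e : E) (u v : V).

Lemma chain_ge0 p q c : chain p q c -> 0 <= c.
Proof. by elim => // p0 x q0 e a b c0 _ _ _; apply: addr_ge0. Qed.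

Lemma chain_cat p x q c1 c2 : chain p x c1 -> chain x q c2 -> chain p q (c1 + c2).
Proof.
move=> H; elim: H q c2 => [p0 | p0 x0 q0 e a b c0 H1 H2 _ IH] q c2 Hc; first by rewrite add0r.
by rewrite -addrA; apply: chainS H1 H2 (IH _ _ Hc).
Qed.

Lemma chain_vert u v : exists c, chain (Vert u) (Vert v) c.
Proof.
case/connectP: (tconnected u v) => s.
elim: s u => [|y s IH] u /=; first by move=> _ ->; exists 0; exact: chain0.
move=> /andP[/existsP[e He] Hs] Hv; have [c Hc] := IH y Hs Hv.
case/orP: He => /andP[/eqP E1 /eqP E2].
  by exists (`|0 - l e| + c); apply: (chainS (e := e)) Hc; [left | right].
by exists (`|l e - 0| + c); apply: (chainS (e := e)) Hc; [right | left].
Qed.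

Lemma chain_to_vert p : is_pt p ->
  exists u, (exists c, chain p (Vert u) c) /\ (exists c, chain (Vert u) p c).
Proof.
case: p => [v | e t] /= Ht.
  by exists v; split; exists 0; exact: chain0.
exists (src e); split.
  by exists (`|t - 0| + 0); apply: (chainS (e := e)) (chain0 _); [split | left].
by exists (`|0 - t| + 0); apply: (chainS (e := e)) (chain0 _); [left | split].
Qed.

Lemma chain_ex p q : is_pt p -> is_pt q -> exists c, chain p q c.
Proof.
move=> /chain_to_vert [u [[c1 H1] _]] /chain_to_vert [v [_ [c2 H2]]].
have [c H] := chain_vert u v.
by exists (c1 + (c + c2)); apply: chain_cat H1 (chain_cat H H2).
Qed.

Lemma dist_ge0 p q : 0 <= dist p q.
Proof.
rewrite /dist; have lb0 : lbound [set c | chain p q c] 0 by move=> c /= /chain_ge0.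
have [[c Hc] | no_chain] := pselect (exists c, chain p q c).
  by apply: lb_le_inf => //; exists c.
have -> : [set c | chain p q c] = set0.
  by apply/seteqP; split => c // Hc; case: no_chain; exists c.
by rewrite inf0.
Qed.

Lemma dist_le p q c : chain p q c -> dist p q <= c.
Proof. by move=> H; apply: ge_inf => //; exists 0 => c' /= /chain_ge0. Qed.

Lemma dist_step p x q e a b : is_pt x -> is_pt q -> onEdge e p a -> onEdge e x b ->
  dist p q <= `|a - b| + dist x q.
Proof.
move=> px pq Hp Hx; have [c0 H0] := chain_ex px pq.
rewrite addrC -lerBlDr; apply: lb_le_inf; first by exists c0.
by move=> c /= Hc; rewrite lerBlDr addrC; apply: dist_le; exact: chainS Hp Hx Hc.
Qed.

Lemma onEdge_pt e p a : onEdge e p a -> is_pt p.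
Proof. by case: p => [v | e' t] //= [-> [H _]]. Qed.

Lemma ptAt_onEdge e s : 0 <= s <= l e -> onEdge e (ptAt e s) s.
Proof.
move=> /andP[s0 sl]; rewrite /ptAt; case: eqP => [-> | /eqP s0']; first by left.
case: eqP => [-> | /eqP sl']; first by right.
by split => //; split => //; rewrite lt_neqAle eq_sym s0' s0 lt_neqAle sl' sl.
Qed.

Lemma ptAt0 e : ptAt e 0 = Vert (src e). Proof. by rewrite /ptAt eqxx. Qed.
Lemma ptAtl e : ptAt e (l e) = Vert (tgt e).
Proof. by rewrite /ptAt eqxx gt_eqF // tl_pos. Qed.

Lemma chain_exit p q c : chain p q c -> forall e t, p = Inner e t ->
  (forall t', q <> Inner e t') ->
  (exists c', chain (Vert (src e)) q c' /\ t + c' <= c) \/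
  (exists c', chain (Vert (tgt e)) q c' /\ l e - t + c' <= c).
Proof.
elim => [p0 | p0 x q0 e0 a b c0 Hp Hx Hc IH] e t Ep Hq; first by case: (Hq t).
subst p0; case: Hp => Ee [/andP[t0 tl] Ea]; subst e0 a.
case: x Hx Hc IH => [v | e' t'] Hx Hc IH.
  case: Hx => [[Ev Eb] | [Ev Eb]]; subst v b.
    by left; exists c0; split => //; rewrite subr0 gtr0_norm //; lra.
  by right; exists c0; split => //; rewrite ltr0_norm; lra.
case: Hx => Ee [/andP[t0' tl'] Eb]; subst e' b.
have n1 : t - t' <= `|t - t'| := ler_norm _.
have n2 : t' - t <= `|t - t'| by rewrite distrC; exact: ler_norm.
case: (IH e t' erefl Hq) => [[c' [H1 H2]] | [c' [H1 H2]]].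
  by left; exists c'; split => //; lra.
by right; exists c'; split => //; lra.
Qed.

Section DistanceToGammaPW.
Variables (P : {set E}) (W : {set V}).
Hypothesis PW_ne : (P != finset.set0) || (W != finset.set0).

Lemma GammaPW_ne : exists q, GammaPW P W q.
Proof.
case/orP: PW_ne => /set0Pn [x Hx].
  by exists (Vert (src x)); left; exists x, 0; split => //; left.
by exists (Vert x); right; exists x.
Qed.

Lemma GammaPW_pt q : GammaPW P W q -> is_pt q.
Proof. by case=> [[e [a [_ H]]] | [v [_ ->]]] //; apply: onEdge_pt H. Qed.

Lemma dPW_lb p : lbound [set c | exists2 q, GammaPW P W q & c = dist p q] 0.
Proof. by move=> c /= [q _ ->]; apply: dist_ge0. Qed.

Lemma dPW_ge0 p : 0 <= dPW P W p.
Proof.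
have [q Hq] := GammaPW_ne.
by apply: lb_le_inf; [exists (dist p q); exists q | exact: dPW_lb].
Qed.

Lemma dPW_le p q : GammaPW P W q -> dPW P W p <= dist p q.
Proof. by move=> H; apply: ge_inf; [exists 0; exact: dPW_lb | exists q]. Qed.

Lemma dPW_step p x e a b : is_pt x -> onEdge e p a -> onEdge e x b ->
  dPW P W p <= `|a - b| + dPW P W x.
Proof.
move=> px Hp Hx; have [q0 H0] := GammaPW_ne.
rewrite addrC -lerBlDr; apply: lb_le_inf; first by exists (dist x q0); exists q0.
move=> c /= [q Hq ->]; rewrite lerBlDr addrC.
by apply: le_trans (dPW_le p Hq) _; exact: dist_step (GammaPW_pt Hq) Hp Hx.
Qed.

(* Off P, a point of e reaches Gamma_{P,W} through an endpoint of e. *)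
Lemma dPW_inner_ge e t : e \notin P -> 0 < t < l e ->
  Num.min (dPW P W (Vert (src e)) + t) (dPW P W (Vert (tgt e)) + l e - t)
  <= dPW P W (Inner e t).
Proof.
move=> eP Ht; have [q0 H0] := GammaPW_ne.
apply: lb_le_inf; first by exists (dist (Inner e t) q0); exists q0.
move=> _ /= [q Hq ->].
have [c0 H0'] := chain_ex (Ht : is_pt (Inner e t)) (GammaPW_pt Hq).
apply: lb_le_inf; first by exists c0.
move=> c /= Hc.
have q_out t' : q <> Inner e t'.
  move=> Eq; subst q; case: Hq => [[e0 [a [He0 [Ee _]]]] | [v [_ //]]].
  by subst e0; rewrite He0 in eP.
have dl1 := dPW_le (Vert (src e)) Hq; have dl2 := dPW_le (Vert (tgt e)) Hq.
rewrite ge_min; have [[c' [H1 H2]] | [c' [H1 H2]]] := chain_exit Hc erefl q_out.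
  by apply/orP; left; have := dist_le H1; lra.
by apply/orP; right; have := dist_le H1; lra.
Qed.

Lemma dPW_edge_ends e : dPW P W (Vert (src e)) <= dPW P W (Vert (tgt e)) + l e /\
                        dPW P W (Vert (tgt e)) <= dPW P W (Vert (src e)) + l e.
Proof.
have l_gt0 := tl_pos e.
have H1 := @dPW_step (Vert (src e)) (Vert (tgt e)) e 0 (l e) I (or_introl (conj erefl erefl))
  (or_intror (conj erefl erefl)).
have H2 := @dPW_step (Vert (tgt e)) (Vert (src e)) e (l e) 0 I (or_intror (conj erefl erefl))
  (or_introl (conj erefl erefl)).
rewrite sub0r normrN gtr0_norm // in H1; rewrite subr0 gtr0_norm // in H2.
by split; lra.
Qed.

Lemma dPW_edge_tent e s : e \notin P -> 0 <= s <= l e ->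
  dPW P W (ptAt e s) =
    Num.min (dPW P W (Vert (src e)) + s) (dPW P W (Vert (tgt e)) + l e - s).
Proof.
move=> eP /andP[s0 sl]; have l_gt0 := tl_pos e; have [hA hB] := dPW_edge_ends e.
rewrite /ptAt; case: eqP => [-> | /eqP s0']; first by rewrite addr0 min_l //; lra.
case: eqP => [-> | /eqP sl']; first by rewrite min_r //; lra.
have Ht : 0 < s < l e by rewrite lt_neqAle eq_sym s0' s0 lt_neqAle sl' sl.
apply/eqP; rewrite eq_le dPW_inner_ge // andbT le_min.
have H1 := @dPW_step (Inner e s) (Vert (src e)) e s 0 I (conj erefl (conj Ht erefl))
  (or_introl (conj erefl erefl)).
have H2 := @dPW_step (Inner e s) (Vert (tgt e)) e s (l e) I (conj erefl (conj Ht erefl))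
  (or_intror (conj erefl erefl)).
rewrite subr0 gtr0_norm in H1; last by lra.
rewrite ltr0_norm in H2; last by lra.
by apply/andP; split; lra.
Qed.

Lemma dPW_edge_flat e s : e \in P -> 0 <= s <= l e -> dPW P W (ptAt e s) = 0.
Proof.
move=> eP Hs; apply/eqP; rewrite eq_le dPW_ge0 andbT.
have Hq : GammaPW P W (ptAt e s) by left; exists e, s; split => //; apply: ptAt_onEdge.
by apply: le_trans (dPW_le _ Hq) _; apply: dist_le; exact: chain0.
Qed.

End DistanceToGammaPW.
End Distance.

Section RationalFunctions.
Variable R : realType.
Variable G : tcurve R.
Notation E := (tE G).
Notation l := (@tl R G).
Notation pt := (pt G).
Implicit Types (f : pt -> R) (e : E) (a : R) (m : int).

Lemma rslope_eq f e a m : has_rslope (fun s => f (ptAt e s)) a m -> rslope f e a = m.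
Proof. by move=> H; apply: xget_unique => // n Hn; apply: has_rslope_uniq Hn H. Qed.

Lemma lslope_eq f e a m : has_lslope (fun s => f (ptAt e s)) a m -> lslope f e a = m.
Proof. by move=> H; apply: xget_unique => // n Hn; apply: has_lslope_uniq Hn H. Qed.

Lemma pw_affine_is_rat f :
  (forall e, exists S, pw_affine (fun s => f (ptAt e s)) 0 (l e) S) -> is_rat f.
Proof. by move=> H e; have [S HS] := H e; exact: pw_affine_pieces (tl_pos e) HS. Qed.

Lemma is_rat_pw_affine f e : is_rat f -> exists S, pw_affine (fun s => f (ptAt e s)) 0 (l e) S.
Proof. by move=> /(_ e); exact: pieces_pw_affine. Qed.

End RationalFunctions.

Section EdgeProfiles.
Variable R : realType.
Variable G : tcurve R.
Notation V := (tV G).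
Notation E := (tE G).
Notation src := (@tsrc R G).
Notation tgt := (@ttgt R G).
Notation l := (@tl R G).
Notation pt := (pt G).
Variables (P : {set E}) (W : {set V}).
Hypothesis PW_ne : (P != finset.set0) || (W != finset.set0).
Implicit Types (e : E) (a t : R).

(* The rational function -d_{P,W}; its divisor will be 2 D_{P,W} - K. *)
Definition negd : pt -> R := fun q => - dPW P W q.

(* Position of the maximum of d_{P,W} on an edge off P. *)
Definition peak e := (dPW P W (Vert (tgt e)) + l e - dPW P W (Vert (src e))) / 2.

Lemma profile_tent e : e \notin P -> is_tent (fun s => dPW P W (ptAt e s)) (l e)
  (dPW P W (Vert (src e))) (dPW P W (Vert (tgt e))) (peak e).
Proof.
move=> eP; have [hA hB] := dPW_edge_ends PW_ne e; split => //; first exact: tl_pos.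
  by rewrite /peak mulrC divfK // pnatr_eq0.
by move=> s Hs; rewrite dPW_edge_tent.
Qed.

Lemma profile_flat e : e \in P -> is_flat (fun s => dPW P W (ptAt e s)) (l e).
Proof. by move=> eP s Hs; rewrite dPW_edge_flat. Qed.

Lemma negd_pw_affine_cls e :
  exists S, pw_affine_cls (fun s => negd (ptAt e s)) (l e) S (e \notin P).
Proof.
have [S HS] : exists S, pw_affine_cls (fun s => dPW P W (ptAt e s)) (l e) S (e \notin P).
  case eP: (e \in P) => /=.
    by exists [::]; exact: flat_pw_affine_cls (profile_flat eP).
  by exists [:: peak e]; exact: tent_pw_affine_cls (profile_tent (negbT eP)).
by exists S; exact: pw_affine_cls_opp.
Qed.

Lemma negd_rslope_cls e a : 0 <= a -> a < l e ->
  exists m, slope_class (e \notin P) m /\ has_rslope (fun s => negd (ptAt e s)) a m.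
Proof.
by move=> a0 al; have [S HS] := negd_pw_affine_cls e; apply: pw_affine_cls_rslope HS a0 al.
Qed.

Lemma negd_lslope_cls e a : 0 < a -> a <= l e ->
  exists m, slope_class (e \notin P) m /\ has_lslope (fun s => negd (ptAt e s)) a m.
Proof.
by move=> a0 al; have [S HS] := negd_pw_affine_cls e; apply: pw_affine_cls_lslope HS a0 al.
Qed.

Lemma negd_rat : is_rat negd.
Proof.
apply: pw_affine_is_rat => e; have [S HS] := negd_pw_affine_cls e.
by exists S; exact: pw_affine_cls_pw HS.
Qed.

Lemma negd_rslope e a : 0 <= a -> a < l e -> rslope negd e a =
  if e \in P then 0 else (if a < peak e then -1 else 1).
Proof.
move=> a0 al; apply: rslope_eq; rewrite /negd; case eP: (e \in P).
  by rewrite -oppr0; apply: has_rslope_opp; exact: (flat_rslope (profile_flat eP) a0 al).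
have -> : (if a < peak e then -1 else 1) = - (if a < peak e then 1 else -1) :> int.
  by case: ifP.
by apply: has_rslope_opp; exact: (tent_rslope (profile_tent (negbT eP)) a0 al).
Qed.

Lemma negd_lslope e a : 0 < a -> a <= l e -> lslope negd e a =
  if e \in P then 0 else (if peak e < a then -1 else 1).
Proof.
move=> a0 al; apply: lslope_eq; rewrite /negd; case eP: (e \in P).
  by rewrite -oppr0; apply: has_lslope_opp; exact: (flat_lslope (profile_flat eP) a0 al).
have -> : (if peak e < a then -1 else 1) = - (if peak e < a then 1 else -1) :> int.
  by case: ifP.
by apply: has_lslope_opp; exact: (tent_lslope (profile_tent (negbT eP)) a0 al).
Qed.

End EdgeProfiles.

Definition bint (b : bool) : int := (b : nat)%:Z.

Lemma Posz_sum (I : finType) (Pr : pred I) (F : I -> nat) :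
  ((\sum_(i | Pr i) F i)%N)%:Z = \sum_(i | Pr i) (F i)%:Z.
Proof. exact: (big_morph Posz PoszD (erefl _)). Qed.

Lemma card_bint (I : finType) (p : pred I) : (#|[set i | p i]%SET|)%:Z = \sum_i bint (p i).
Proof.
rewrite -sum1_card Posz_sum big_mkcond; apply: eq_bigr => i _.
by rewrite inE; case: (p i).
Qed.

Lemma sum_split_set (I : finType) (A : {set I}) (F1 F2 : I -> int) :
  \sum_(i in A) F1 i + \sum_(i in ~: A) F2 i = \sum_i (if i \in A then F1 i else F2 i).
Proof.
rewrite [RHS](bigID (fun i => i \in A)) /=; congr (_ + _); first by apply: eq_bigr => i ->.
by apply: eq_big => i; rewrite finset.in_setC // => /negbTE ->.
Qed.

Section KeyIdentity.
Variable R : realType.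
Variable G : tcurve R.
Notation V := (tV G).
Notation E := (tE G).
Notation src := (@tsrc R G).
Notation tgt := (@ttgt R G).
Notation l := (@tl R G).
Variables (P : {set E}) (W : {set V}) (O : E -> bool).
Hypothesis PW_ne : (P != finset.set0) || (W != finset.set0).
Hypothesis cyc : cyclic_orient P O.

(* At an interior point, D_{P,W} is 1 exactly at the peak of a tent edge, *)
(* where -d_{P,W} has the two outgoing slopes +1.                          *)
Lemma negd_div_inner e t : 0 < t < l e ->
  divf (negd P W) (Inner e t) = 2 * DPW P W O (Inner e t) - Kcan (Inner e t).
Proof.
move=> /andP[t0 tl]; rewrite /divf /DPW /Kcan subr0.
rewrite negd_rslope ?(ltW t0) // negd_lslope ?(ltW tl) //.
case eP: (e \in P).
  by rewrite (asboolF (flat_not_crit (profile_flat PW_ne eP) (t := t))).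
have tent := profile_tent PW_ne (negbT eP).
have crit_peak := tent_crit tent.
case: (eqVneq t (peak P W e)) => [tc | tc].
  have c0 : 0 < peak P W e by rewrite -tc.
  have cl : peak P W e < l e by rewrite -tc.
  have [Hl Hr] := tent_into_peak tent c0 cl; rewrite -tc in Hl Hr.
  have Hc : crit P W e t by apply/(crit_peak t) => //; apply/andP.
  by rewrite (asboolT Hc) (asboolT Hl) (asboolT Hr) -tc ltxx.
have Hc : ~ crit P W e t.
  by move=> /(crit_peak t) Ht; move/eqP: tc; apply; apply: Ht; apply/andP.
by rewrite (asboolF Hc); case: (ltgtP t (peak P W e)) tc.
Qed.

Lemma negd_rslope_src e : rslope (negd P W) e 0 =
  if e \in P then 0 else 2 * bint `[< into_r P W e 0 >] - 1.
Proof.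
rewrite negd_rslope ?lexx ?tl_pos //; case eP: (e \in P) => //.
have tent := profile_tent PW_ne (negbT eP).
have [peak0 | peak_pos] := eqVneq (peak P W e) 0.
  by rewrite (asboolT ((tent_into_right0 tent).2 peak0)) peak0 ltxx.
have -> : `[< into_r P W e 0 >] = false.
  by apply: asboolF => /(tent_into_right0 tent) E0; move: peak_pos; rewrite E0 eqxx.
by rewrite lt_neqAle eq_sym peak_pos (peak_ge0 tent).
Qed.

Lemma negd_lslope_tgt e : lslope (negd P W) e (l e) =
  if e \in P then 0 else 2 * bint `[< into_l P W e (l e) >] - 1.
Proof.
rewrite negd_lslope ?lexx ?tl_pos //; case eP: (e \in P) => //.
have tent := profile_tent PW_ne (negbT eP).
have [peakL | peak_ne] := eqVneq (peak P W e) (l e).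
  by rewrite (asboolT ((tent_into_leftL tent).2 peakL)) peakL ltxx.
have -> : `[< into_l P W e (l e) >] = false.
  by apply: asboolF => /(tent_into_leftL tent) EL; move: peak_ne; rewrite EL eqxx.
by rewrite lt_neqAle peak_ne (peak_leL tent).
Qed.

(* At a vertex, the outgoing slopes of -d_{P,W} add up to 2 deg^- - deg:  *)
(* each edge off P contributes +-1 according to its orientation in hat G, *)
(* and the edges of P cancel against deg thanks to the cyclic orientation.  *)
Lemma negd_div_vert v :
  divf (negd P W) (Vert v) = 2 * DPW P W O (Vert v) - Kcan (Vert v).
Proof.
pose ir e := `[< into_r P W e 0 >]; pose il e := `[< into_l P W e (l e) >].
pose slopes e := (if src e == v then (if e \in P then 0 else 2 * bint (ir e) - 1) else 0)
  + (if tgt e == v then (if e \in P then 0 else 2 * bint (il e) - 1) else 0).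
pose indeg e := if e \in P then ((O e && (tgt e == v)) + (~~ O e && (src e == v)))%N%:Z
  else ((ir e && (src e == v)) + (il e && (tgt e == v)))%N%:Z.
pose at_src e := bint ((e \in [set: E]%SET) && (src e == v)).
pose at_tgt e := bint ((e \in [set: E]%SET) && (tgt e == v)).
pose head e := bint ((e \in P) && ((if O e then tgt e else src e) == v)).
pose tail e := bint ((e \in P) && ((if O e then src e else tgt e) == v)).
have edge_id e : slopes e + at_src e + at_tgt e + head e = 2 * indeg e + tail e.
  rewrite /slopes /indeg /at_src /at_tgt /head /tail !inE /=.
  by case: (e \in P); case: (O e); case: (src e == v); case: (tgt e == v);
    case: (ir e); case: (il e).
have out_slopes : divf (negd P W) (Vert v) = \sum_e slopes e.
  rewrite /divf (eq_bigr _ (fun e _ => negd_rslope_src e)).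
  rewrite (eq_bigr _ (fun e _ => negd_lslope_tgt e)).
  by rewrite big_mkcond [X in _ + X]big_mkcond -big_split.
have indegE : (indegV P W O v)%:Z = \sum_e indeg e.
  by rewrite /indegV PoszD !Posz_sum sum_split_set.
have degE : (degin_set src tgt [set: E]%SET v)%:Z = \sum_e at_src e + \sum_e at_tgt e.
  by rewrite /degin_set PoszD !card_bint.
have cycE : \sum_e head e = \sum_e tail e by move/(congr1 Posz): (cyc v); rewrite !card_bint.
have sumE : \sum_e slopes e + \sum_e at_src e + \sum_e at_tgt e + \sum_e head e
    = 2 * \sum_e indeg e + \sum_e tail e.
  by rewrite -!big_split mulr_sumr -big_split; apply: eq_bigr => e _; exact: edge_id.
rewrite out_slopes /DPW /Kcan PoszM indegE degE; lia.
Qed.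

Lemma negd_div p : is_pt p -> divf (negd P W) p = 2 * DPW P W O p - Kcan p.
Proof. by case: p => [v | e t] /= Hp; [exact: negd_div_vert | exact: negd_div_inner]. Qed.

End KeyIdentity.

Lemma DPW_theta_char (R : realType) (G : tcurve R) (P : {set tE G}) (W : {set tV G})
    (O : tE G -> bool) :
  (P != finset.set0) || (W != finset.set0) -> cyclic_orient P O -> theta_char (DPW P W O).
Proof.
move=> PW_ne cyc; exists (negd P W); split; first exact: negd_rat.
by move=> p Hp; rewrite (negd_div PW_ne cyc).
Qed.

Lemma half_diff_rslope (R : realType) (F1 F2 : R -> R) a (m1 m2 k : int) :
  m1 - m2 = k * 2 -> has_rslope F1 a m1 -> has_rslope F2 a m2 ->
  has_rslope (fun s => (F1 s - F2 s) / 2) a k.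
Proof.
move=> Hk; apply: (has_rslope_lin (c1 := 1 / 2) (c2 := - (1 / 2))); first by move=> s; field.
by rewrite (@intr_half R _ _ Hk) intrB; field.
Qed.

Lemma half_diff_lslope (R : realType) (F1 F2 : R -> R) a (m1 m2 k : int) :
  m1 - m2 = k * 2 -> has_lslope F1 a m1 -> has_lslope F2 a m2 ->
  has_lslope (fun s => (F1 s - F2 s) / 2) a k.
Proof. by move=> Hk; rewrite !has_lslope_reflect; apply: half_diff_rslope. Qed.

(* A finite network with positive edge lengths, carrying a potential h on the   *)
(* vertices and a current k along the edges with h (tgt e) - h (src e) = k e l e *)
(* (Ohm's law) and no sources (Kirchhoff's law), has no current: the energy     *)
(* sum_e k e ^ 2 l e equals sum_v h v (inflow - outflow) = 0.                   *)
Lemma sourceless_current_zero (R : realDomainType) (V E : finType) (src tgt : E -> V)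
    (len : E -> R) (h : V -> R) (k : E -> R) :
  (forall e, 0 < len e) -> (forall e, h (tgt e) = h (src e) + k e * len e) ->
  (forall v, \sum_(e | src e == v) k e = \sum_(e | tgt e == v) k e) ->
  forall e, k e = 0.
Proof.
move=> len_gt0 ohm kirchhoff e.
have at_end (f : E -> V) : \sum_e k e * h (f e) = \sum_v h v * \sum_(e | f e == v) k e.
  rewrite (partition_big f xpredT) //=; apply: eq_bigr => v _; rewrite mulr_sumr.
  by apply: eq_bigr => e' /eqP ->; rewrite mulrC.
have energy0 : \sum_e k e ^+ 2 * len e = 0.
  transitivity (\sum_e k e * (h (tgt e) - h (src e))).
    by apply: eq_bigr => e' _; rewrite ohm; ring.
  under eq_bigr do rewrite mulrBr.
  by rewrite sumrB !at_end; under eq_bigr do rewrite -kirchhoff; rewrite subrr.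
have term_ge0 (e' : E) : true -> 0 <= k e' ^+ 2 * len e'.
  by move=> _; apply: mulr_ge0; [exact: sqr_ge0 | exact: ltW].
move: (psumr_eq0P term_ge0 energy0 (i := e) isT) => /eqP.
by rewrite mulf_eq0 (gt_eqF (len_gt0 e)) orbF expf_eq0 => /eqP.
Qed.

(* Part (1), "if": for fixed P, all D_{P,W} are linearly equivalent, via the  *)
(* rational function (d_{P,W'} - d_{P,W}) / 2.                              *)
Section SameP.
Variable R : realType.
Variable G : tcurve R.
Notation V := (tV G).
Notation E := (tE G).
Notation l := (@tl R G).
Notation pt := (pt G).
Variables (P : {set E}) (W W' : {set V}) (O O' : E -> bool).
Hypotheses (PW_ne : (P != finset.set0) || (W != finset.set0))
  (PW'_ne : (P != finset.set0) || (W' != finset.set0)).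
Hypotheses (cyc : cyclic_orient P O) (cyc' : cyclic_orient P O').

Definition half_gap : pt -> R := fun q => (negd P W q - negd P W' q) / 2.

Lemma half_gap_rat : is_rat half_gap.
Proof.
apply: pw_affine_is_rat => e.
have [S1 H1] := negd_pw_affine_cls PW_ne e; have [S2 H2] := negd_pw_affine_cls PW'_ne e.
by exists (S1 ++ S2); exact: pw_affine_cls_half H1 H2.
Qed.

Lemma half_gap_rslope e a : 0 <= a -> a < l e ->
  rslope half_gap e a * 2 = rslope (negd P W) e a - rslope (negd P W') e a.
Proof.
move=> a0 al.
have [m1 [c1 H1]] := negd_rslope_cls PW_ne a0 al.
have [m2 [c2 H2]] := negd_rslope_cls PW'_ne a0 al.
have [k Hk] := slope_class_diff_even c1 c2.
by rewrite !(rslope_eq H1, rslope_eq H2) (rslope_eq (half_diff_rslope Hk H1 H2)).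
Qed.

Lemma half_gap_lslope e a : 0 < a -> a <= l e ->
  lslope half_gap e a * 2 = lslope (negd P W) e a - lslope (negd P W') e a.
Proof.
move=> a0 al.
have [m1 [c1 H1]] := negd_lslope_cls PW_ne a0 al.
have [m2 [c2 H2]] := negd_lslope_cls PW'_ne a0 al.
have [k Hk] := slope_class_diff_even c1 c2.
by rewrite !(lslope_eq H1, lslope_eq H2) (lslope_eq (half_diff_lslope Hk H1 H2)).
Qed.

Lemma half_gap_div p : is_pt p -> divf half_gap p * 2 = divf (negd P W) p - divf (negd P W') p.
Proof.
case: p => [v | e t] /= => [_ | /andP[t0 tl]]; last first.
  by rewrite mulrDl half_gap_rslope ?half_gap_lslope ?(ltW t0) ?(ltW tl) //; lia.
rewrite mulrDl !mulr_suml.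
rewrite (eq_bigr _ (fun e _ => half_gap_rslope (lexx 0) (tl_pos e))).
rewrite (eq_bigr _ (fun e _ => half_gap_lslope (tl_pos e) (lexx (l e)))).
by rewrite !sumrB; ring.
Qed.

Lemma sameP_lin_equiv : lin_equiv (DPW P W O) (DPW P W' O').
Proof.
exists half_gap; split => [|p Hp]; first exact: half_gap_rat.
by have := half_gap_div Hp; rewrite (negd_div PW_ne cyc Hp) (negd_div PW'_ne cyc' Hp); lia.
Qed.
End SameP.

Section DifferentP.
Variable R : realType.
Variable G : tcurve R.
Notation V := (tV G).
Notation E := (tE G).
Notation src := (@tsrc R G).
Notation tgt := (@ttgt R G).
Notation l := (@tl R G).
Notation pt := (pt G).
Variables (P P' : {set E}) (W W' : {set V}) (O O' : E -> bool).
Hypotheses (PW_ne : (P != finset.set0) || (W != finset.set0))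
  (PW'_ne : (P' != finset.set0) || (W' != finset.set0)).
Hypotheses (cyc : cyclic_orient P O) (cyc' : cyclic_orient P' O').
Variable f : pt -> R.
Hypotheses (f_rat : is_rat f)
  (f_div : forall p, is_pt p -> DPW P W O p - DPW P' W' O' p = divf f p).

(* The function h, written with -d so as to reuse the key identity. *)
Definition harm : pt -> R := fun q => 2 * f q + (negd P' W' q - negd P W q).

Lemma harm_pw_affine e : exists S, pw_affine (fun s => harm (ptAt e s)) 0 (l e) S.
Proof.
have [S0 H0] := is_rat_pw_affine e f_rat.
have [S1 /pw_affine_cls_pw H1] := negd_pw_affine_cls PW_ne e.
have [S2 /pw_affine_cls_pw H2] := negd_pw_affine_cls PW'_ne e.
exists (S0 ++ (S2 ++ S1)); apply: (pw_affine_lin (c1 := 2) (c2 := 1) _ H0).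
  by move=> s; rewrite /harm mul1r.
by apply: (pw_affine_lin (c1 := 1) (c2 := -1) _ H2 H1) => s; rewrite mul1r mulN1r.
Qed.

Lemma harm_rslope e a : 0 <= a -> a < l e ->
  rslope harm e a = 2 * rslope f e a + (rslope (negd P' W') e a - rslope (negd P W) e a).
Proof.
move=> a0 al; have [S0 H0] := is_rat_pw_affine e f_rat.
have [mf Hf] := pw_affine_rslope H0 a0 al.
have [m1 [_ H1]] := negd_rslope_cls PW_ne a0 al.
have [m2 [_ H2]] := negd_rslope_cls PW'_ne a0 al.
have Hgap : has_rslope (fun s => negd P' W' (ptAt e s) - negd P W (ptAt e s)) a (m2 - m1).
  apply: (has_rslope_lin (c1 := 1) (c2 := -1) _ _ H2 H1); first by move=> s; ring.
  by rewrite intrB; ring.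
rewrite (rslope_eq Hf) (rslope_eq H1) (rslope_eq H2); apply: rslope_eq.
apply: (has_rslope_lin (c1 := 2) (c2 := 1) _ _ Hf Hgap); first by move=> s; rewrite /harm; ring.
by rewrite [RHS]intrD intrM; ring.
Qed.

Lemma harm_lslope e a : 0 < a -> a <= l e ->
  lslope harm e a = 2 * lslope f e a + (lslope (negd P' W') e a - lslope (negd P W) e a).
Proof.
move=> a0 al; have [S0 H0] := is_rat_pw_affine e f_rat.
have [mf Hf] := pw_affine_lslope H0 a0 al.
have [m1 [_ H1]] := negd_lslope_cls PW_ne a0 al.
have [m2 [_ H2]] := negd_lslope_cls PW'_ne a0 al.
have Hgap : has_lslope (fun s => negd P' W' (ptAt e s) - negd P W (ptAt e s)) a (m2 - m1).
  apply: (has_lslope_lin (c1 := 1) (c2 := -1) _ _ H2 H1); first by move=> s; ring.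
  by rewrite intrB; ring.
rewrite (lslope_eq Hf) (lslope_eq H1) (lslope_eq H2); apply: lslope_eq.
apply: (has_lslope_lin (c1 := 2) (c2 := 1) _ _ Hf Hgap); first by move=> s; rewrite /harm; ring.
by rewrite [RHS]intrD intrM; ring.
Qed.

Lemma harm_div p : is_pt p -> divf harm p = 0.
Proof.
move=> Hp.
have -> : divf harm p = 2 * divf f p + (divf (negd P' W') p - divf (negd P W) p).
  case: p Hp => [v | e t] /= => [_ | /andP[t0 tl]]; last first.
    by rewrite harm_rslope ?harm_lslope ?(ltW t0) ?(ltW tl) //; ring.
  rewrite (eq_bigr _ (fun e _ => harm_rslope (lexx 0) (tl_pos e))).
  rewrite (eq_bigr _ (fun e _ => harm_lslope (tl_pos e) (lexx (l e)))).
  by rewrite !big_split /= !sumrN -!mulr_sumr; ring.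
by rewrite -(f_div Hp) (negd_div PW_ne cyc Hp) (negd_div PW'_ne cyc' Hp); lia.
Qed.

Definition current e := rslope harm e 0.

Lemma harm_affine e : affine_on (fun s => harm (ptAt e s)) 0 (l e) (current e).
Proof.
have [S HS] := harm_pw_affine e.
have bal : balanced (fun s => harm (ptAt e s)) 0 (l e).
  move=> t m n Ht Hm Hn; have := harm_div (p := Inner e t) Ht.
  by rewrite /= (rslope_eq Hm) (lslope_eq Hn).
have [k Hk] := balanced_affine HS (tl_pos e) bal.
by rewrite /current (rslope_eq (affine_on_rslope Hk (tl_pos e))).
Qed.

Lemma harm_ohm e : harm (Vert (tgt e)) = harm (Vert (src e)) + (current e)%:~R * l e.
Proof.
have := @harm_affine e (l e); rewrite (ltW (tl_pos e)) lexx /= ptAtl ptAt0 subr0.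
by apply.
Qed.

Lemma harm_kirchhoff v :
  \sum_(e | src e == v) ((current e)%:~R : R) = \sum_(e | tgt e == v) (current e)%:~R.
Proof.
have := harm_div (p := Vert v) I; rewrite /=.
have out_tgt e : lslope harm e (l e) = - current e.
  exact: lslope_eq (affine_on_lslope (@harm_affine e) (tl_pos e)).
rewrite (eq_bigr _ (fun e _ => out_tgt e)) sumrN => /eqP; rewrite subr_eq0 => /eqP Hv.
by rewrite -!rmorph_sum Hv.
Qed.

Lemma current_zero e : current e = 0.
Proof.
have := sourceless_current_zero (h := fun v => harm (Vert v)) (@tl_pos _ G) harm_ohm.
by move/(_ harm_kirchhoff e)/eqP; rewrite intr_eq0 => /eqP.
Qed.

(* The slope of h at the start of e is 2 mf + m' - m, which must be 0; so *)
(* m and m' have the same parity and e lies in P iff it lies in P'.      *)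
Lemma divisor_gap_same_P : P = P'.
Proof.
apply/setP => e.
have [m1 [c1 H1]] := negd_rslope_cls PW_ne (lexx 0) (tl_pos e).
have [m2 [c2 H2]] := negd_rslope_cls PW'_ne (lexx 0) (tl_pos e).
have [S0 H0] := is_rat_pw_affine e f_rat.
have [mf Hf] := pw_affine_rslope H0 (lexx 0) (tl_pos e).
have := harm_rslope (lexx 0) (tl_pos e).
rewrite -/(current e) current_zero (rslope_eq H1) (rslope_eq H2) (rslope_eq Hf) => gap.
by apply: negb_inj; apply: (slope_class_parity c1 c2 (k := mf)); lia.
Qed.
End DifferentP.

Theorem proposition3p4 (R : realType) (G : tcurve R)
    (P P' : {set tE G}) (W W' : {set tV G}) (O O' : tE G -> bool) :
  evenP P -> evenP P' ->
  (P != finset.set0) || (W != finset.set0) -> (P' != finset.set0) || (W' != finset.set0) ->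
  cyclic_orient P O -> cyclic_orient P' O' ->
  (lin_equiv (DPW P W O) (DPW P' W' O') <-> P = P') /\
  theta_char (DPW P W O).
Proof.
move=> _ _ PW_ne PW'_ne cyc cyc'; split; last exact: DPW_theta_char PW_ne cyc.
split=> [[f [f_rat f_div]] | EP]; last by subst P'; exact: sameP_lin_equiv.
exact: (divisor_gap_same_P PW_ne PW'_ne cyc cyc' f_rat f_div).
Qed.
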